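(* Let $B$ be a finite dimensional C*-algebra of dimension $n\ge4$ with its canonical trace. Define $(\mu^* )^{(0)}=id_1$ and, for $p\ge1$, $(\mu^* )^{(p)}=(id_{p-1}\otimes\mu^* )(id_{p-2}\otimes\mu^* )\cdots(id_1\otimes\mu^* )\mu^*\in Hom_{\mathcal C_B}(1,p+1)$; for $p\ge1$ set $\eta^{(p)}=(\mu^* )^{(p-1)}\eta\in Hom_{\mathcal C_B}(0,p)$. Then for every $k\in\mathbb N$, every arrow in $Hom_{\mathcal C_B}(0,k)$ is a linear combination of compositions of maps of the form $id_a\otimes\eta^{(p)}\otimes id_b$ with $a,b,p\in\mathbb N$.
   Context: The canonical trace $\tau$ of $B$ is the restriction to $B$ of the normalised trace of $\mathcal L(B)$ via the left regular representation. $B^{\otimes m}$ ($B^{\otimes0}=\mathbb C$) are Hilbert spaces via $\langle x,y\rangle=\tau(y^*x)$; $\mu$ is multiplication, $\eta:\mathbb C\to B$ is $1\mapsto1$, $id_m$ is the identity of $B^{\otimes m}$. $\mathcal C_B$ is the concrete monoidal W*-category with objects $k\in\mathbb N$ (Hilbert space $B^{\otimes k}$) whose morphisms $Hom_{\mathcal C_B}(k,l)\subset\mathcal L(B^{\otimes k},B^{\otimes l})$ are the linear combinations of composable compositions of tensor products of $\eta,\mu,\eta^*,\mu^*,id_m$. *)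

(* finite-dimensional C*-algebras modelled by Artin-Wedderburn
   as B = (+)_i M_{n_i}(C), C = complex numbers R[i] over a realType R. *)
From HB Require Import structures.
From mathcomp Require Import all_boot all_order all_algebra.
From mathcomp Require Import reals.
From mathcomp Require Import complex.
From Stdlib Require Import ClassicalEpsilon.
Set Implicit Arguments. Unset Strict Implicit. Unset Printing Implicit Defensive.
Import Order.TTheory GRing.Theory Num.Theory.
Local Open Scope ring_scope.

Section CB.
Variable R : realType.
Variable ns : seq nat.  (* block sizes: B = M_{ns_0}(C) (+) ... (+) M_{ns_r}(C) *)

Notation C := (complex R).

(* basis of B: matrix units e^i_{jk}, indexed by (i, (j, k)) *)
Definition fib (i : 'I_(size ns)) : finType :=
  ('I_(nth 0%N ns i) * 'I_(nth 0%N ns i))%type.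
Local Notation I := {i : 'I_(size ns) & fib i}.

Definition blk (a : I) : nat := tag a.
Definition row (a : I) : nat := (tagged a).1.
Definition col (a : I) : nat := (tagged a).2.

(* structure constants: e_a e_b = sum_c mu_coef a b c e_c *)
Definition mu_coef (a b c : I) : C :=
  ([&& blk a == blk b, blk c == blk a, col a == row b,
       row c == row a & col c == col b])%:R.

Definition bstar (b : I) : I := existT _ (tag b) ((tagged b).2, (tagged b).1).

(* An element of B^{(x)k} is given by its coefficients on the basis tensors
   e_{s_1} (x) ... (x) e_{s_k}, s a k-tuple of basis indices (only tuples of
   the right size are meaningful). *)
Definition vec := seq I -> C.
(* A linear map B^{(x)k} -> B^{(x)l} is given by its matrix: f y x is the
   coefficient of the output basis tensor y (size l) on the input one x (size k). *)
Definition mor := seq I -> seq I -> C.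

Definition eqmor (k l : nat) (f g : mor) : Prop :=
  forall (y : l.-tuple I) (x : k.-tuple I), f y x = g y x.

Definition idm : mor := fun y x => (y == x)%:R.

Definition comp (m : nat) (g f : mor) : mor :=
  fun z x => \sum_(y : m.-tuple I) g z y * f y x.

Definition tens (k1 l1 : nat) (f g : mor) : mor :=
  fun y x => f (take l1 y) (take k1 x) * g (drop l1 y) (drop k1 x).

Definition apply (k : nat) (f : mor) (x : vec) : vec :=
  fun y => \sum_(s : k.-tuple I) f y s * x s.

Definition mu : mor := fun y x =>
  match y, x with [:: c], [:: a; b] => mu_coef a b c | _, _ => 0 end.
Definition eta : mor := fun y x =>
  match y, x with [:: c], [::] => (row c == col c)%:R | _, _ => 0 end.

(* canonical trace: normalised trace of the left regular representation
   L_x (e_b) = x e_b = sum_a sum_c x_a mu_coef a b c e_c *)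
Definition tau (x : I -> C) : C :=
  (#|{: I}|%:R)^-1 * \sum_(b : I) \sum_(a : I) x a * mu_coef a b b.

(* <e_a, e_b> = tau(e_b^* e_a) *)
Definition ip1 (a b : I) : C :=
  \sum_(c : I) mu_coef (bstar b) a c * tau (fun d => (d == c)%:R).

(* inner product of the Hilbert space B^{(x)k} (tensor product inner product,
   i.e. <x, y> = tau^{(x)k}(y^* x)), linear in the first variable *)
Definition ipb (s t : seq I) : C := \prod_(p <- zip s t) ip1 p.1 p.2.
Definition ip (k : nat) (x y : vec) : C :=
  \sum_(s : k.-tuple I) \sum_(t : k.-tuple I) x s * conjc (y t) * ipb s t.

Definition is_adjoint (k l : nat) (f g : mor) : Prop :=
  forall x y : vec, ip l (apply k f x) y = ip k x (apply l g y).

Definition adjoint (k l : nat) (f : mor) : mor :=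
  epsilon (inhabits (fun _ _ => 0)) (is_adjoint k l f).

Inductive gen : nat -> nat -> mor -> Prop :=
| gen_eta : gen 0 1 eta
| gen_mu : gen 2 1 mu
| gen_eta_adj : gen 1 0 (adjoint 0 1 eta)
| gen_mu_adj : gen 1 2 (adjoint 2 1 mu)
| gen_id m : gen m m idm.

Inductive tgen : nat -> nat -> mor -> Prop :=
| tgen_one k l f : gen k l f -> tgen k l f
| tgen_tens k1 l1 f k2 l2 g :
    gen k1 l1 f -> tgen k2 l2 g -> tgen (k1 + k2) (l1 + l2) (tens k1 l1 f g).

Inductive cgen : nat -> nat -> mor -> Prop :=
| cgen_one k l f : tgen k l f -> cgen k l f
| cgen_comp k m l f g : cgen k m f -> tgen m l g -> cgen k l (comp m g f).

Definition inspan (S : mor -> Prop) (k l : nat) (f : mor) : Prop :=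
  exists (N : nat) (c : 'I_N -> C) (fs : 'I_N -> mor),
    (forall i, S (fs i)) /\
    eqmor k l f (fun y x => \sum_(i < N) c i * fs i y x).

Definition HomCB (k l : nat) (f : mor) : Prop := inspan (cgen k l) k l f.

Fixpoint mu_adj_pow (p : nat) : mor :=
  match p with
  | 0 => idm
  | p'.+1 => comp p'.+1 (tens p' p' idm (adjoint 2 1 mu)) (mu_adj_pow p')
  end.

Definition eta_pow (p : nat) : mor := comp 1 (mu_adj_pow p.-1) eta.

Definition layer (a p b : nat) : mor := tens a a idm (tens 0 p (eta_pow p) idm).

Inductive etacomp : nat -> mor -> Prop :=
| etacomp_nil : etacomp 0 idm
| etacomp_cons k f a p b : etacomp k f -> (0 < p)%N -> k = (a + b)%N ->
    etacomp (a + p + b) (comp k (layer a p b) f).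

End CB.

From Pilot Require Import Defs.
From mathcomp Require Import all_boot all_order all_algebra.
From mathcomp Require Import reals complex ring zify.
From Stdlib Require Import ClassicalEpsilon.
Set Implicit Arguments. Unset Strict Implicit. Unset Printing Implicit Defensive.
Import Order.TTheory GRing.Theory Num.Theory.
Local Open Scope ring_scope.

(* Index B = (+)_i M_(n_i)(C) by its matrix units e_a and put kappa_a = N / n_i, where
   N = dim B and e_a lies in block i.  Then eta^(p) has coefficient kappa^(p-1) on
   e_(s_1) ⊗ ... ⊗ e_(s_p) when e_(s_1) e_(s_2) ... e_(s_p) e_(s_1) is nonzero, i.e. when s
   is a cycle of matrix units, and 0 otherwise.  From this formula, mu^* applied to any
   factor of eta^(p) gives eta^(p+1), eta^* gives eta^(p-1) (with eta^(0) = 1), and mu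
   applied to two adjacent factors gives N eta^(p-1).
   Hence the span W of composites of layers id_a ⊗ eta^(p) ⊗ id_b is stable under
   id ⊗ g ⊗ id for each generator g: g commutes with a top layer it does not touch and
   acts by a scalar on one containing all its legs.  The remaining case is mu with one leg
   in a layer eta^(p+1) and one outside it; this yields id ⊗ c ⊗ id applied to the layers
   below, where c is the p-fold iterate of mu^*, itself a composite of generators.  As W
   contains id_0, it contains every morphism 0 -> k. *)

Section Sums.
Variables (T : finType) (K : comPzSemiRingType).
Implicit Types F : seq T -> K.

Lemma sum_delta (J : finType) (G : J -> K) j0 : \sum_j (j == j0)%:R * G j = G j0.
Proof.
rewrite (bigD1 j0) //= eqxx mul1r big1 ?addr0 // => j /negbTE ->.
by rewrite mul0r.
Qed.

Lemma sum_deltaC (J : finType) (G : J -> K) j0 : \sum_j (j0 == j)%:R * G j = G j0.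
Proof. by rewrite -(sum_delta G j0); apply: eq_bigr => j _; rewrite eq_sym. Qed.

Lemma sum_tuple0 F : \sum_(x : 0.-tuple T) F x = F [::].
Proof. by rewrite (big_pred1 [tuple]) // => x /=; rewrite [x]tuple0; apply/esym/eqP. Qed.

Lemma sum_tuple1 F : \sum_(x : 1.-tuple T) F x = \sum_c F [:: c].
Proof.
rewrite (reindex (fun c : T => [tuple c])) //=.
exists (fun t : 1.-tuple T => thead t) => [c _ // | t _].
by apply: val_inj; case: t => -[|c [|]].
Qed.

Lemma sum_tuple_cat m n F :
  \sum_(x : (m + n).-tuple T) F x =
  \sum_(x1 : m.-tuple T) \sum_(x2 : n.-tuple T) F (x1 ++ x2).
Proof.
have take_sz (t : (m + n).-tuple T) : size (take m t) == m.
  by rewrite size_takel // size_tuple leq_addr.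
have drop_sz (t : (m + n).-tuple T) : size (drop m t) == n.
  by rewrite size_drop size_tuple addKn.
rewrite pair_bigA (reindex (fun p : m.-tuple T * n.-tuple T => cat_tuple p.1 p.2)) //=.
exists (fun t => (Tuple (take_sz t), Tuple (drop_sz t))) => [[x1 x2] _ | t _].
  by congr pair; apply: val_inj; rewrite /= ?take_size_cat ?drop_size_cat ?size_tuple.
by apply: val_inj; rewrite /= cat_take_drop.
Qed.

Lemma sum_tuple_delta m (t : seq T) F :
  size t = m -> \sum_(x : m.-tuple T) (t == x)%:R * F x = F t.
Proof.
move=> /eqP st; rewrite -[RHS]/((fun x : m.-tuple T => F x) (Tuple st)) -sum_deltaC.
by apply: eq_bigr => x _; rewrite -val_eqE.
Qed.

End Sums.

Section Splitting.
Variable T : Type.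
Implicit Types z : seq T.

Lemma split2 z n1 n2 : size z = (n1 + n2)%N ->
  exists u1 u2, [/\ z = u1 ++ u2, size u1 = n1 & size u2 = n2].
Proof.
move=> sz; exists (take n1 z), (drop n1 z).
by rewrite cat_take_drop size_takel ?size_drop ?sz ?addKn ?leq_addr.
Qed.

Lemma split3 z n1 n2 n3 : size z = (n1 + n2 + n3)%N ->
  exists u1 u2 u3, [/\ z = u1 ++ u2 ++ u3, size u1 = n1, size u2 = n2 & size u3 = n3].
Proof.
rewrite -addnA => /split2 [u1 [w [-> s1 /split2 [u2 [u3 [-> s2 s3]]]]]].
by exists u1, u2, u3.
Qed.

Lemma split4 z n1 n2 n3 n4 : size z = (n1 + n2 + n3 + n4)%N ->
  exists u1 u2 u3 u4, [/\ z = u1 ++ u2 ++ u3 ++ u4, size u1 = n1, size u2 = n2,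
     size u3 = n3 & size u4 = n4].
Proof.
rewrite -addnA => /split3 [u1 [u2 [w [-> s1 s2 /split2 [u3 [u4 [-> s3 s4]]]]]]].
by exists u1, u2, u3, u4.
Qed.

Lemma split5 z n1 n2 n3 n4 n5 : size z = (n1 + n2 + n3 + n4 + n5)%N ->
  exists u1 u2 u3 u4 u5, [/\ z = u1 ++ u2 ++ u3 ++ u4 ++ u5, size u1 = n1,
     size u2 = n2, size u3 = n3 & size u4 = n4 /\ size u5 = n5].
Proof.
rewrite -addnA => /split4 [u1 [u2 [u3 [w [-> s1 s2 s3 /split2 [u4 [u5 [-> s4 s5]]]]]]]].
by exists u1, u2, u3, u4, u5.
Qed.

End Splitting.

Section Whiskering.
Variables (T : finType) (K : comPzSemiRingType).
Implicit Types (z : seq T) (v f : seq T -> K) (g h : seq T -> seq T -> K).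

Definition eqv k v f := forall z, size z = k -> v z = f z.

(* [act_at a m l g v] is [(id_a ⊗ g ⊗ id) v] for [g : m -> l], in coordinates. *)
Definition act_at a m l g v : seq T -> K :=
  fun z => \sum_(x : m.-tuple T) g (take l (drop a z)) x * v (take a z ++ x ++ drop (a + l) z).

Lemma act_atE a m l g v u1 u2 u3 : size u1 = a -> size u2 = l ->
  act_at a m l g v (u1 ++ u2 ++ u3) = \sum_(x : m.-tuple T) g u2 x * v (u1 ++ x ++ u3).
Proof.
move=> s1 s2; rewrite /act_at (drop_size_cat _ s1) (take_size_cat _ s2) (take_size_cat _ s1).
by rewrite catA drop_size_cat // size_cat s1 s2.
Qed.

Lemma size_cat3 (u1 x u3 : seq T) :
  size (u1 ++ x ++ u3) = (size u1 + size x + size u3)%N.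
Proof. by rewrite !size_cat addnA. Qed.

Lemma eqv_act_at a m l b g v f :
  eqv (a + m + b) v f -> eqv (a + l + b) (act_at a m l g v) (act_at a m l g f).
Proof.
move=> vf z /split3 [u1 [u2 [u3 [-> s1 s2 s3]]]].
by rewrite !act_atE //; apply: eq_bigr => x _; rewrite vf // size_cat3 s1 s3 size_tuple.
Qed.

Lemma eq_act_at a m l b g h v :
  (forall s (x : m.-tuple T), size s = l -> g s x = h s x) ->
  eqv (a + l + b) (act_at a m l g v) (act_at a m l h v).
Proof.
move=> gh z /split3 [u1 [u2 [u3 [-> s1 s2 s3]]]].
by rewrite !act_atE //; apply: eq_bigr => x _; rewrite gh.
Qed.

Lemma act_atZ a m l c g v z :
  act_at a m l (fun s x => c * g s x) v z = c * act_at a m l g v z.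
Proof. by rewrite /act_at mulr_sumr; apply: eq_bigr => x _; rewrite mulrA. Qed.

Lemma act_at_id a m b v : eqv (a + m + b) (act_at a m m (fun y x => (y == x)%:R) v) v.
Proof.
move=> z /split3 [u1 [u2 [u3 [-> s1 s2 s3]]]].
by rewrite act_atE //; apply: (sum_tuple_delta (fun x => v (u1 ++ x ++ u3))).
Qed.

Lemma act_at_comm a m l d q r e g h v :
  eqv (a + l + d + r + e) (act_at a m l g (act_at (a + m + d) q r h v))
                          (act_at (a + l + d) q r h (act_at a m l g v)).
Proof.
move=> z /split5 [u1 [u2 [u3 [u4 [u5 [-> s1 s2 s3 [s4 s5]]]]]]].
rewrite act_atE // [in RHS](catA u1) [in RHS]catA act_atE ?size_cat ?s1 ?s2 ?s3 //.
transitivity (\sum_(x : m.-tuple T) \sum_(y : q.-tuple T)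
   g u2 x * (h u4 y * v (u1 ++ x ++ u3 ++ y ++ u5))).
  apply: eq_bigr => x _; rewrite (catA u1) catA act_atE ?size_cat ?s1 ?s3 ?size_tuple //.
  by rewrite mulr_sumr; apply: eq_bigr => y _; rewrite !catA.
rewrite exchange_big; apply: eq_bigr => y _.
rewrite -!catA act_atE // mulr_sumr; apply: eq_bigr => x _.
by rewrite mulrCA.
Qed.

Lemma act_at_nest a j m l e q b g h v :
  eqv (a + (j + l + e) + b) (act_at (a + j) m l g (act_at a q (j + m + e) h v))
      (act_at a q (j + l + e) (fun s x => act_at j m l g (h^~ x) s) v).
Proof.
move=> z; rewrite !addnA => /split5 [u1 [w1 [w2 [w3 [u3 [-> s1 sw1 sw2 [sw3 s3]]]]]]].
have -> : u1 ++ w1 ++ w2 ++ w3 ++ u3 = (u1 ++ w1) ++ w2 ++ (w3 ++ u3) by rewrite !catA.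
rewrite act_atE ?size_cat ?s1 ?sw1 //.
have -> : (u1 ++ w1) ++ w2 ++ w3 ++ u3 = u1 ++ (w1 ++ w2 ++ w3) ++ u3 by rewrite !catA.
rewrite act_atE ?size_cat3 ?sw1 ?sw2 ?sw3 //.
transitivity (\sum_(x' : m.-tuple T) \sum_(x : q.-tuple T)
   g w2 x' * (h (w1 ++ x' ++ w3) x * v (u1 ++ x ++ u3))).
  apply: eq_bigr => x' _.
  have -> : (u1 ++ w1) ++ x' ++ w3 ++ u3 = u1 ++ (w1 ++ x' ++ w3) ++ u3 by rewrite !catA.
  by rewrite act_atE ?size_cat3 ?sw1 ?sw3 ?size_tuple // mulr_sumr.
rewrite exchange_big; apply: eq_bigr => x _.
by rewrite act_atE // mulr_suml; apply: eq_bigr => x' _; rewrite mulrA.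
Qed.

End Whiskering.

Section MatrixUnits.
Variables (R : realType) (ns : seq nat).
Local Notation C := R[i].
Local Notation I := {i : 'I_(size ns) & @fib ns i}.
Local Notation row := (@Defs.row ns).
Local Notation col := (@Defs.col ns).
Implicit Types (a b c d : I) (s w : seq I).

Lemma eq_basisE a b : (a == b) = [&& blk a == blk b, row a == row b & col a == col b].
Proof.
case: a => i [j k]; case: b => i' [j' k']; rewrite /blk /row /col /=.
case: (eqVneq i i') => [E|ne]; first by subst i'; rewrite eqxx eq_Tagged /= xpair_eqE.
have -> : (i == i' :> nat) = false by apply/negbTE; rewrite val_eqE.
by apply/negbTE/negP => /eqP/(congr1 tag)/= /eqP; rewrite (negbTE ne).
Qed.

Lemma sum_basis (G : I -> C) :
  \sum_c G c = \sum_(i : 'I_(size ns)) \sum_(x : @fib ns i) G (Tagged (@fib ns) x).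
Proof.
rewrite (sig_big_dep (op := +%R) (J := @fib ns) xpredT (fun _ _ => true)
  (fun i x => G (Tagged (@fib ns) x))) /=.
by apply: eq_bigr => -[i x].
Qed.

Lemma card_basis : #|{: I}| = (\sum_(m <- ns) m ^ 2)%N.
Proof.
rewrite card_tagged sumnE big_map big_enum /= (big_nth 0%N) big_mkord.
by apply: eq_bigr => i _; rewrite card_prod card_ord.
Qed.

Definition bdim a : nat := nth 0%N ns (blk a).
Definition dimB : C := #|{: I}|%:R.
(* [wt a = tau (e_a^* e_a) = n_i / dim B] is the squared norm of [e_a] (see [ip1E]). *)
Definition wt a : C := (bdim a)%:R / dimB.
Definition kappa a : C := dimB / (bdim a)%:R.

Lemma bdim_neq0 a : (bdim a)%:R != 0 :> C.
Proof. by rewrite pnatr_eq0 -lt0n (leq_ltn_trans _ (ltn_ord (tagged a).1)). Qed.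

Lemma dimB_sum : dimB = \sum_(i : 'I_(size ns)) (nth 0%N ns i ^ 2)%:R.
Proof. by rewrite /dimB card_basis (big_nth 0%N) big_mkord natr_sum. Qed.

Hypothesis dimB_neq0 : dimB != 0.

Lemma wt_neq0 a : wt a != 0.
Proof. by rewrite mulf_neq0 ?invr_eq0 ?bdim_neq0. Qed.

Lemma wt_kappa a b : blk a = blk b -> wt a * kappa b = 1.
Proof.
by rewrite /wt /kappa /bdim => ->; rewrite mulrA divfK // mulfV // bdim_neq0.
Qed.

Definition composable a b : bool := (blk a == blk b) && (col a == row b).

Definition mul_idx a b : I :=
  existT _ (tag a) ((tagged a).1, insubd (tagged a).1 (val (tagged b).2)).

Lemma col_mul_idx a b : blk a = blk b -> col (mul_idx a b) = col b.
Proof.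
move=> ab; rewrite /col /= val_insubd.
have -> // : (val (tagged b).2 < nth 0%N ns (tag a))%N by rewrite [val (tag a)]ab ltn_ord.
Qed.

Lemma mu_coefE a b c : mu_coef R a b c = (composable a b && (c == mul_idx a b))%:R.
Proof.
rewrite /mu_coef eq_basisE /composable.
case: (eqVneq (blk a) (blk b)) => //= ab; rewrite col_mul_idx //.
by case: (blk c == blk a); case: (col a == row b); case: (row c == row a); case: (col c == col b).
Qed.

(* The coefficients of [eta^(p)], by [eta_pow_cyc]. *)
Definition cyc s : C :=
  if s is c :: _ then (cycle composable s)%:R * kappa c ^+ (size s).-1 else 1.

Lemma kappa_blk a b : blk a = blk b -> kappa a = kappa b.
Proof. by rewrite /kappa /bdim => ->. Qed.

Lemma path_composable_blk x s : path composable x s -> all (fun y => blk y == blk x) s.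
Proof.
elim: s x => //= y s IH x /andP[/andP[/eqP xy _] /IH].
by rewrite xy eqxx.
Qed.

Lemma cycle_composable_blk c s y :
  cycle composable (c :: s) -> y \in c :: s -> blk y = blk c.
Proof.
move=> /path_composable_blk /allP cs; rewrite inE => /orP[/eqP -> //|ys].
by apply/eqP/cs; rewrite mem_rcons inE ys orbT.
Qed.

Lemma cyc_rot n s : cyc (rot n s) = cyc s.
Proof.
case: s => [|c s]; first by case: n.
case E: (rot n (c :: s)) => [|d t]; first by move/(congr1 size): E; rewrite size_rot.
have dcs : d \in c :: s by rewrite -(mem_rot n) E inE eqxx.
rewrite /cyc -E rot_cycle size_rot.
case Hc: (cycle composable (c :: s)); last by rewrite !mul0r.
by rewrite (kappa_blk (cycle_composable_blk Hc dcs)).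
Qed.

Lemma cyc_catC s w : cyc (s ++ w) = cyc (w ++ s).
Proof. by rewrite -(rot_size_cat s w) cyc_rot. Qed.

Lemma cyc_cons2 a b s :
  cyc (a :: b :: s) = (composable a b)%:R * kappa a * cyc (mul_idx a b :: s).
Proof.
rewrite /cyc /=; case ab: (composable a b) => /=; last by rewrite !mul0r.
have bab : blk a = blk b by case/andP: ab => /eqP.
have comp_r y : composable (mul_idx a b) y = composable b y.
  by rewrite /composable col_mul_idx // -bab.
have -> : path composable b (rcons s a) = path composable (mul_idx a b) (rcons s (mul_idx a b)).
  by case: s => [|x s] /=; rewrite comp_r // !rcons_path.
by rewrite mul1r exprS mulrCA.
Qed.

Lemma cyc_mus w1 a b w3 :
  \sum_c mu_coef R a b c * kappa c * cyc (w1 ++ c :: w3) = cyc (w1 ++ a :: b :: w3).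
Proof.
rewrite cyc_catC !cat_cons cyc_cons2.
under eq_bigr => c _ do rewrite cyc_catC mu_coefE cat_cons.
case ab: (composable a b) => /=; last by rewrite big1 ?mul0r // => c _; rewrite !mul0r.
by under eq_bigr => c _ do rewrite -mulrA; rewrite sum_delta mul1r.
Qed.

Lemma sum_row_indicator c : \sum_a ((blk a == blk c) && (row a == row c))%:R = (bdim c)%:R :> C.
Proof.
rewrite sum_basis (bigD1 (tag c)) //= [X in _ + X]big1 ?addr0 => [|i ne]; last first.
  apply: big1 => x _; rewrite /blk /=.
  by have -> : (i == tag c :> nat) = false by apply/negbTE; rewrite val_eqE.
rewrite /blk /= eqxx /=.
transitivity (\sum_(j : 'I_(nth 0%N ns (tag c))) \sum_(k : 'I_(nth 0%N ns (tag c)))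
    (j == (tagged c).1)%:R : C).
  by rewrite pair_bigA; apply: eq_bigr => -[j k] _; rewrite /row /= val_eqE.
under eq_bigr do rewrite sumr_const card_ord.
by rewrite (bigD1 (tagged c).1) //= eqxx big1 ?addr0 // => j /negbTE ->; rewrite mul0rn.
Qed.

Lemma sum_mu_coef_r a d :
  \sum_b mu_coef R a b d = ((blk d == blk a) && (row d == row a))%:R.
Proof.
case: (eqVneq (blk d) (blk a)) => /= da; last first.
  by rewrite big1 // => b _; rewrite /mu_coef (negbTE da) andbF.
pose b0 : I := existT _ (tag a) ((tagged a).2, insubd (tagged a).2 (val (tagged d).2)).
have col_b0 : col b0 = col d.
  rewrite /col /= val_insubd.
  by have -> // : (val (tagged d).2 < nth 0%N ns (tag a))%N by rewrite -[val (tag a)]da ltn_ord.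
rewrite -(sum_deltaC (fun=> (row d == row a)%:R) b0).
apply: eq_bigr => b _; rewrite /mu_coef da eqxx eq_basisE col_b0 -natrM mulnb.
change (blk b0) with (blk a); change (row b0) with (col a).
rewrite (eq_sym (blk a)) (eq_sym (col a)) (eq_sym (col d)).
by case: (blk b == _); case: (row b == _); case: (col b == _); case: (row d == _).
Qed.

Lemma cyc_mu w1 d w3 :
  \sum_a \sum_b mu_coef R a b d * cyc (w1 ++ a :: b :: w3) = dimB * cyc (w1 ++ d :: w3).
Proof.
rewrite cyc_catC cat_cons.
transitivity (\sum_a \sum_b mu_coef R a b d * (kappa d * cyc (d :: w3 ++ w1))).
  apply: eq_bigr => a _; apply: eq_bigr => b _.
  rewrite cyc_catC !cat_cons cyc_cons2 mu_coefE.
  case: (composable a b) => /=; last by rewrite !mul0r.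
  by case: (eqVneq d (mul_idx a b)) => [->|]; rewrite ?mul0r ?mul1r.
under eq_bigr do rewrite -big_distrl sum_mu_coef_r eq_sym [(row d == _)]eq_sym.
rewrite -big_distrl /=.
by rewrite sum_row_indicator mulrA; congr (_ * _); rewrite /kappa mulrC divfK ?bdim_neq0.
Qed.

Definition diag_idx a : I := existT _ (tag a) ((tagged a).1, (tagged a).1).

Lemma sum_diag : \sum_c (row c == col c)%:R * (bdim c)%:R = dimB.
Proof.
rewrite dimB_sum sum_basis; apply: eq_bigr => i _.
transitivity (\sum_(j : 'I_(nth 0%N ns i)) \sum_(k : 'I_(nth 0%N ns i))
    (j == k)%:R * (nth 0%N ns i)%:R : C).
  by rewrite pair_bigA; apply: eq_bigr => -[j k] _; rewrite /row /col /= val_eqE.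
under eq_bigr => j _ do rewrite (sum_deltaC (fun=> (nth 0%N ns i)%:R)).
by rewrite sumr_const card_ord natrX expr2 mulr_natr.
Qed.

Lemma cyc_etas w1 w3 :
  \sum_c wt c * (row c == col c)%:R * cyc (w1 ++ c :: w3) = cyc (w1 ++ w3).
Proof.
rewrite [RHS]cyc_catC; under eq_bigr do rewrite cyc_catC cat_cons.
case: (w3 ++ w1) => [|r0 r].
  transitivity ((\sum_c (row c == col c)%:R * (bdim c)%:R) / dimB).
    rewrite mulr_suml; apply: eq_bigr => c _.
    rewrite /cyc /= /composable eqxx /= andbT expr0 mulr1 (eq_sym (col c)) /wt.
    by case: (row c == col c); rewrite ?mulr1 ?mul1r ?mulr0 ?mul0r.
  by rewrite sum_diag mulfV.
have diag_comp c : (row c == col c) && composable c r0 = (c == diag_idx r0).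
  rewrite /composable eq_basisE.
  change (blk (diag_idx r0)) with (blk r0); change (row (diag_idx r0)) with (row r0).
  change (col (diag_idx r0)) with (row r0).
  case: (eqVneq (col c) (row r0)) => [E|]; last by rewrite !andbF.
  by rewrite E !andbT andbC.
have mul_diag : mul_idx (diag_idx r0) r0 = r0.
  by apply/eqP; rewrite eq_basisE col_mul_idx // !eqxx.
transitivity (\sum_c (c == diag_idx r0)%:R * (wt r0 * kappa r0 * cyc (r0 :: r))).
  2: by rewrite (sum_delta (fun=> _ * _)) wt_kappa ?mul1r.
apply: eq_bigr => c _; rewrite cyc_cons2.
case: (eqVneq c (diag_idx r0)) => [-> | ne].
  have comp_diag : composable (diag_idx r0) r0 by rewrite /composable !eqxx.
  rewrite mul_diag comp_diag !eqxx /= !mulr1n.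
  by change (wt (diag_idx r0)) with (wt r0); change (kappa (diag_idx r0)) with (kappa r0); ring.
have : ~~ ((row c == col c) && composable c r0) by rewrite diag_comp.
by case/nandP => /negbTE ->; rewrite /= !mulr0n !(mulr0, mul0r).
Qed.

Lemma blk_bstar b : blk (bstar b) = blk b. Proof. by []. Qed.
Lemma row_bstar b : row (bstar b) = col b. Proof. by []. Qed.
Lemma col_bstar b : col (bstar b) = row b. Proof. by []. Qed.
Lemma blk_mul_idx a b : blk (mul_idx a b) = blk a. Proof. by []. Qed.
Lemma row_mul_idx a b : row (mul_idx a b) = row a. Proof. by []. Qed.

Lemma mul_idx_bstar_r x y d : (composable x y && (d == mul_idx x y)) =
  (composable d (bstar y) && (x == mul_idx d (bstar y))).
Proof.
rewrite /composable !eq_basisE !blk_mul_idx !row_mul_idx blk_bstar row_bstar.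
case: (eqVneq (blk x) (blk y)) => xy; case: (eqVneq (blk d) (blk y)) => dy //=.
- rewrite !col_mul_idx // col_bstar xy dy eqxx /= (eq_sym (row d)) (eq_sym (col d)).
  by case: (col x == row y); case: (row x == row d); case: (col y == col d).
- by rewrite xy eq_sym (negbTE dy) !andbF.
- by rewrite dy (negbTE xy) !andbF.
Qed.

Lemma mul_idx_bstar_l x y d : (composable y x && (d == mul_idx y x)) =
  (composable (bstar y) d && (x == mul_idx (bstar y) d)).
Proof.
rewrite /composable !eq_basisE !blk_mul_idx !row_mul_idx blk_bstar row_bstar col_bstar.
case: (eqVneq (blk y) (blk x)) => yx; case: (eqVneq (blk y) (blk d)) => yd //=; last first.
- by rewrite andbF.
- by rewrite andbF.
rewrite !col_mul_idx // (eq_sym (row d)) (eq_sym (col d)) (eq_sym (col y)).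
by case: (row x == col y); case: (row y == row d); case: (col x == col d).
Qed.

Definition comul_coef s y : C := wt y * cyc (s ++ [:: bstar y]).

Lemma comul_coef1 x y : comul_coef [:: x] y = (x == y)%:R.
Proof.
rewrite /comul_coef /cyc /= /composable blk_bstar row_bstar col_bstar andbT expr1 eq_basisE.
case: (eqVneq (blk x) (blk y)) => xy; last by rewrite /= mul0r mulr0.
rewrite /= mulrCA wt_kappa ?mulr1 // (eq_sym (row y)).
by case: (col x == col y); case: (row x == row y).
Qed.

Lemma comul_coef_mu_r s d y :
  \sum_x mu_coef R x y d * cyc (s ++ [:: x]) = comul_coef (s ++ [:: d]) y.
Proof.
rewrite /comul_coef -catA cyc_catC !cat_cons cat0s cyc_cons2.
under eq_bigr do rewrite cyc_catC cat1s mu_coefE mul_idx_bstar_r -mulnb natrM -mulrA.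
rewrite -mulr_sumr sum_delta.
case dy: (composable d (bstar y)); last by rewrite !mul0r mulr0.
by rewrite !mul1r mulrA wt_kappa ?mul1r //; case/andP: dy => /eqP ->.
Qed.

Lemma comul_coef_mu_l d t y :
  \sum_x mu_coef R y x d * cyc (x :: t) = comul_coef (d :: t) y.
Proof.
rewrite /comul_coef cyc_catC cat1s cyc_cons2.
under eq_bigr do rewrite mu_coefE mul_idx_bstar_l -mulnb natrM -mulrA.
rewrite -mulr_sumr sum_delta.
case yd: (composable (bstar y) d); last by rewrite !mul0r mulr0.
by rewrite !mul1r mulrA wt_kappa ?mul1r.
Qed.

Lemma comul_coef_mus w1 a b w3 y :
  \sum_c mu_coef R a b c * kappa c * comul_coef (w1 ++ c :: w3) y =
  comul_coef (w1 ++ a :: b :: w3) y.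
Proof.
rewrite /comul_coef -catA !cat_cons -cyc_mus mulr_sumr; apply: eq_bigr => c _.
by rewrite -catA cat_cons mulrCA.
Qed.

End MatrixUnits.

Section Adjoints.
Variables (R : realType) (ns : seq nat).
Local Notation C := R[i].
Local Notation I := {i : 'I_(size ns) & @fib ns i}.
Local Notation row := (@Defs.row ns).
Local Notation col := (@Defs.col ns).
Local Notation mor := (mor R ns).
Local Notation dimB := (@dimB R ns).
Local Notation wt := (@wt R ns).
Local Notation kappa := (@kappa R ns).
Hypothesis dimB_neq0 : dimB != 0.
Implicit Types (a b c : I) (s t : seq I).

Lemma tau_basis c : tau (fun d : I => (d == c)%:R) = (row c == col c)%:R * wt c.
Proof.
rewrite /tau (eq_bigr (fun b => ((blk b == blk c) && (row b == row c))%:R * (row c == col c)%:R)).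
  by rewrite -mulr_suml sum_row_indicator /wt /dimB; ring.
move=> b _; rewrite (sum_delta (fun a => mu_coef R a b b)) /mu_coef eqxx andbT -natrM mulnb.
rewrite (eq_sym (blk c)); case: (blk b == blk c) => //=.
by case: (eqVneq (row b) (row c)) => [->|_]; rewrite ?andbF // andbT eq_sym.
Qed.

Lemma ip1E a b : ip1 R a b = (a == b)%:R * wt a.
Proof.
rewrite /ip1; under eq_bigr do rewrite tau_basis mu_coefE -mulnb natrM -mulrA.
rewrite -mulr_sumr (sum_delta (fun c => (row c == col c)%:R * wt c)).
rewrite /composable blk_bstar col_bstar row_mul_idx row_bstar.
case: (eqVneq (blk b) (blk a)) => ba /=; last first.
  by rewrite mul0r eq_basisE (eq_sym (blk a)) (negbTE ba) mul0r.
rewrite col_mul_idx // eq_basisE ba eqxx /= (eq_sym (row a)) (eq_sym (col a)).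
rewrite /wt /bdim blk_mul_idx blk_bstar ba.
by case: (row b == row a); case: (col b == col a); rewrite ?mul1r ?mul0r.
Qed.

Lemma conjcM (x y : C) : conjc (x * y) = conjc x * conjc y.
Proof. exact: rmorphM. Qed.

Lemma conjc_sum (J : finType) (F : J -> C) : conjc (\sum_j F j) = \sum_j conjc (F j).
Proof. exact: rmorph_sum. Qed.

Definition wts s : C := \prod_(a <- s) wt a.

Lemma ipbE s t : size s = size t -> ipb R s t = (s == t)%:R * wts s.
Proof.
elim: s t => [|a s IH] [|b t] //=; first by rewrite /ipb /wts !big_nil mul1r.
move=> [st]; rewrite /ipb /wts /= !big_cons -/(ipb R s t) IH // ip1E eqseq_cons.
by rewrite -mulnb natrM /wts; ring.
Qed.

Lemma ipE k (x y : vec R ns) :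
  ip k x y = \sum_(s : k.-tuple I) x s * conjc (y s) * wts s.
Proof.
rewrite /ip; apply: eq_bigr => s _.
rewrite -(sum_tuple_delta (fun t => x s * conjc (y t) * wts s) (size_tuple s)).
by apply: eq_bigr => t _; rewrite ipbE ?size_tuple //; ring.
Qed.

Lemma conj_wts s : conjc (wts s) = wts s.
Proof.
rewrite /wts; elim: s => [|a s IH]; first by rewrite big_nil conjc1.
by rewrite big_cons conjcM IH /wt /dimB conjcM conjc_inv !conjc_nat.
Qed.

Lemma wts_neq0 s : wts s != 0.
Proof. by rewrite prodf_seq_neq0; apply/allP => a _; apply: wt_neq0. Qed.

(* The adjoint in the basis [e_s], which is orthogonal with [<e_s, e_s> = wts s]. *)
Definition adjmor (f : mor) : mor := fun x y => conjc (f y x) * wts y / wts x.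

Lemma adjmor_adjoint k l f : is_adjoint k l f (adjmor f).
Proof.
move=> x y; rewrite !ipE /apply /adjmor.
transitivity (\sum_(s : l.-tuple I) \sum_(u : k.-tuple I) x u * f s u * conjc (y s) * wts s).
  by apply: eq_bigr => s _; rewrite !mulr_suml; apply: eq_bigr => u _; ring.
rewrite exchange_big; apply: eq_bigr => u _.
rewrite conjc_sum !mulr_sumr mulr_suml; apply: eq_bigr => s _.
rewrite !conjcM conjcK conjc_inv !conj_wts.
by have := wts_neq0 u => ?; field.
Qed.

Lemma is_adjoint_coef k l f g (x0 : k.-tuple I) (y0 : l.-tuple I) :
  is_adjoint k l f g -> g x0 y0 = adjmor f x0 y0.
Proof.
move=> /(_ (fun s => (s == x0)%:R) (fun s => (s == y0)%:R)); rewrite !ipE /apply.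
have delta (m : nat) (u0 : m.-tuple I) (F : seq I -> C) :
    \sum_(u : m.-tuple I) F u * (u == u0 :> seq I)%:R = F u0.
  by rewrite -(sum_tuple_delta F (size_tuple u0)); apply: eq_bigr => u _; rewrite mulrC eq_sym.
under eq_bigr do rewrite delta conjc_nat mulrAC.
under [in RHS]eq_bigr do rewrite delta -mulrA mulrC.
rewrite (delta _ _ (fun s => f s x0 * wts s)) (delta _ _ (fun u => conjc (g u y0) * wts u)).
move=> E; have {}E : conjc (g x0 y0) = f y0 x0 * wts y0 / wts x0.
  by rewrite E mulfK ?wts_neq0.
by rewrite -[g x0 y0]conjcK E /adjmor !conjcM conjc_inv !conj_wts.
Qed.

Lemma adjointE k l f (x0 : k.-tuple I) (y0 : l.-tuple I) :
  Defs.adjoint k l f x0 y0 = adjmor f x0 y0.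
Proof.
apply: is_adjoint_coef; apply: epsilon_spec.
by exists (adjmor f); apply: adjmor_adjoint.
Qed.

Lemma eta_adjE c : Defs.adjoint 0 1 (@eta R ns) [::] [:: c] = wt c * (row c == col c)%:R.
Proof.
have := adjointE (@eta R ns) [tuple] [tuple c]; rewrite /= => ->.
by rewrite /adjmor conjc_nat /wts big_cons !big_nil invr1 !mulr1 mulrC.
Qed.

Lemma mu_adjE a b c :
  Defs.adjoint 2 1 (@mu R ns) [:: a; b] [:: c] = mu_coef R a b c * kappa c.
Proof.
have := adjointE (@mu R ns) [tuple a; b] [tuple c]; rewrite /= => ->.
rewrite /adjmor -[mu R _ _]/(mu_coef R a b c) /wts !big_cons !big_nil !mulr1 mu_coefE conjc_nat.
case ab: (composable a b) => /=; last by rewrite mulr0n !mul0r.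
case: eqP => [->|_]; last by rewrite mulr0n !mul0r.
have ba : blk b = blk a by case/andP: ab => /eqP ->.
rewrite /wt /kappa /bdim ba blk_mul_idx !mul1r.
by rewrite invfM mulrA mulfV ?mul1r ?invf_div // mulf_neq0 ?invr_eq0 ?bdim_neq0.
Qed.

End Adjoints.

Section Layers.
Variables (R : realType) (ns : seq nat).
Local Notation C := R[i].
Local Notation I := {i : 'I_(size ns) & @fib ns i}.
Local Notation mor := (mor R ns).
Local Notation dimB := (@dimB R ns).
Local Notation kappa := (@kappa R ns).
Local Notation cyc := (@cyc R ns).
Local Notation idm := (@idm R ns).
Local Notation mus := (Defs.adjoint 2 1 (@mu R ns)).
Local Notation etas := (Defs.adjoint 0 1 (@eta R ns)).
Hypothesis dimB_neq0 : dimB != 0.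
Implicit Types (f g : mor) (v : seq I -> C).

Lemma compA m n h g f z x :
  Defs.comp m (Defs.comp n h g) f z x = Defs.comp n h (Defs.comp m g f) z x.
Proof.
rewrite /Defs.comp; under eq_bigr do rewrite mulr_suml.
rewrite exchange_big; apply: eq_bigr => y _; rewrite mulr_sumr.
by apply: eq_bigr => y' _; rewrite mulrA.
Qed.

Lemma comp_act_at m l g f :
  eqv l ((Defs.comp m g f)^~ [::]) (act_at 0 m l g (f^~ [::])).
Proof.
move=> z sz; rewrite /act_at drop0 take0 add0n -sz take_size drop_size /=.
by apply: eq_bigr => y _; rewrite cats0.
Qed.

Lemma act_at_tens a k1 l1 k2 l2 b f g v :
  eqv (a + (l1 + l2) + b) (act_at a (k1 + k2) (l1 + l2) (tens k1 l1 f g) v)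
      (act_at a k1 l1 f (act_at (a + k1) k2 l2 g v)).
Proof.
move=> z; rewrite !addnA => /split4 [u1 [w1 [w2 [u3 [-> s1 sw1 sw2 s3]]]]].
rewrite (catA w1) act_atE ?size_cat ?sw1 ?sw2 //.
rewrite (sum_tuple_cat k1 k2 (fun x => tens k1 l1 f g (w1 ++ w2) x * v (u1 ++ x ++ u3))).
rewrite -(catA w1) act_atE //; apply: eq_bigr => x1 _.
rewrite catA act_atE ?size_cat ?s1 ?size_tuple // mulr_sumr; apply: eq_bigr => x2 _.
rewrite /tens (take_size_cat _ sw1) (drop_size_cat _ sw1).
rewrite (take_size_cat _ (size_tuple x1)) (drop_size_cat _ (size_tuple x1)).
by rewrite -!mulrA !catA.
Qed.

Lemma layer_act_at a p b f :
  eqv (a + p + b) ((Defs.comp (a + b) (layer R a p b) f)^~ [::])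
      (act_at a 0 p (eta_pow R p) (f^~ [::])).
Proof.
move=> z /split3 [u1 [u2 [u3 [-> s1 s2 s3]]]].
rewrite act_atE // (sum_tuple0 (fun x => eta_pow R p u2 x * f (u1 ++ x ++ u3) [::])) /=.
rewrite /Defs.comp (sum_tuple_cat a b (fun y => layer R a p b (u1 ++ u2 ++ u3) y * f y [::])).
rewrite -(sum_tuple_delta (fun y1 => eta_pow R p u2 [::] * f (y1 ++ u3) [::]) s1).
apply: eq_bigr => y1 _.
rewrite -(sum_tuple_delta (fun y2 => (u1 == y1)%:R * (eta_pow R p u2 [::] * f (y1 ++ y2) [::])) s3).
apply: eq_bigr => y2 _.
rewrite /layer /tens /idm (take_size_cat _ s1) (drop_size_cat _ s1).
rewrite (take_size_cat _ (size_tuple y1)) (drop_size_cat _ (size_tuple y1)).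
by rewrite (take_size_cat _ s2) (drop_size_cat _ s2) take0 drop0 /=; ring.
Qed.

Lemma act_at_musE a v u1 x y u3 : size u1 = a ->
  act_at a 1 2 mus v (u1 ++ [:: x; y] ++ u3) = \sum_c mu_coef R x y c * kappa c * v (u1 ++ c :: u3).
Proof.
move=> s1; rewrite act_atE // (sum_tuple1 (fun t => mus [:: x; y] t * v (u1 ++ t ++ u3))).
by apply: eq_bigr => c _; rewrite mu_adjE.
Qed.

Lemma act_at_muE a v u1 d u3 : size u1 = a ->
  act_at a 2 1 (@mu R ns) v (u1 ++ [:: d] ++ u3) =
  \sum_x \sum_y mu_coef R x y d * v (u1 ++ x :: y :: u3).
Proof.
move=> s1; rewrite act_atE // (sum_tuple_cat 1 1 (fun t => mu R [:: d] t * v (u1 ++ t ++ u3))).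
rewrite (sum_tuple1 (fun t1 => \sum_(t2 : 1.-tuple I)
  mu R [:: d] (t1 ++ t2) * v (u1 ++ (t1 ++ t2) ++ u3))); apply: eq_bigr => x _.
by rewrite (sum_tuple1 (fun t => mu R [:: d] ([:: x] ++ t) * v (u1 ++ ([:: x] ++ t) ++ u3))).
Qed.

Definition cyc_mor : mor := fun s _ => cyc s.

Lemma act_at_mus_cyc j e s : size s = (j + 2 + e)%N -> act_at j 1 2 mus cyc s = cyc s.
Proof.
case/split3 => w1 [w2 [w3 [-> s1 + _]]]; case: w2 => [|x [|y [|]]] // _.
by rewrite act_at_musE // cyc_mus.
Qed.

Lemma act_at_etas_cyc j e s : size s = (j + 0 + e)%N -> act_at j 1 0 etas cyc s = cyc s.
Proof.
case/split3 => w1 [w2 [w3 [-> s1 + _]]]; case: w2 => // _.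
rewrite act_atE // (sum_tuple1 (fun t => etas [::] t * cyc (w1 ++ t ++ w3))) /= -cyc_etas //.
by apply: eq_bigr => c _; rewrite eta_adjE.
Qed.

Lemma act_at_mu_cyc j e s : size s = (j + 1 + e)%N -> act_at j 2 1 (@mu R ns) cyc s = dimB * cyc s.
Proof.
case/split3 => w1 [w2 [w3 [-> s1 + _]]]; case: w2 => [|d [|]] // _.
by rewrite act_at_muE // cyc_mu.
Qed.

Lemma eta_pow_cyc p s : size s = p.+1 -> eta_pow R p.+1 s [::] = cyc s.
Proof.
elim: p s => [|p IH] s ss.
  rewrite /eta_pow /= (@comp_act_at _ _ _ _ _ ss) (@act_at_id _ _ 0 1 0 _ _ ss).
  case: s ss => [|c [|]] // _.
  by rewrite /cyc /= /composable eqxx /= andbT expr0 mulr1 eq_sym.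
rewrite /eta_pow /= compA (@comp_act_at _ _ _ _ _ ss).
have sp2 : size s = (p + 2)%N by rewrite ss addn2.
have := @act_at_tens 0 p p 1 2 0 idm mus (eta_pow R p.+1 ^~ [::]) s.
rewrite add0n addn0 => /(_ sp2); rewrite addn1 addn2 => ->.
rewrite (@act_at_id _ _ 0 p 2 _ s) ?add0n // (@eqv_act_at _ _ p 1 2 0 _ _ cyc) ?addn0 //.
  by rewrite (@act_at_mus_cyc p 0) // addn0.
by move=> y; rewrite addn1; exact: IH.
Qed.

Lemma layer_cyc a p b f : (0 < p)%N ->
  eqv (a + p + b) ((Defs.comp (a + b) (layer R a p b) f)^~ [::])
      (act_at a 0 p cyc_mor (f^~ [::])).
Proof.
case: p => [//|p] _ z sz; rewrite (@layer_act_at a p.+1 b f z sz).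
by apply: (@eq_act_at _ _ a 0 p.+1 b) => // s x ss; rewrite [x]tuple0 /= eta_pow_cyc.
Qed.

Lemma act_at_cyc0 a b v : eqv (a + 0 + b) (act_at a 0 0 cyc_mor v) v.
Proof.
move=> z /split3 [u1 [u2 [u3 [-> s1 + _]]]]; case: u2 => // _.
by rewrite act_atE // (sum_tuple0 (fun t => cyc_mor [::] t * v (u1 ++ t ++ u3))) mul1r.
Qed.

(* On outputs of length [p.+1] this is [(mu^* )^(p)], by [act_at_comul_iter_mus]. *)
Definition comul_iter : mor := fun s x => if x is [:: y] then comul_coef R s y else 0.

Lemma act_at_comul_iter1 a b v : eqv (a + 1 + b) (act_at a 1 1 comul_iter v) v.
Proof.
move=> z sz; rewrite -[RHS](@act_at_id _ _ a 1 b v z sz).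
apply: (@eq_act_at _ _ a 1 1 b) => // -[|s0 [|]] // x _.
by case: x => -[|y [|]] //= _; rewrite comul_coef1 // eqseq_cons andbT.
Qed.

Lemma act_at_comul_iter_mus a p b v :
  eqv (a + p.+2 + b) (act_at (a + p) 1 2 mus (act_at a 1 p.+1 comul_iter v))
      (act_at a 1 p.+2 comul_iter v).
Proof.
move=> z sz; have := @act_at_nest _ _ a p 1 2 0 1 b mus comul_iter v z.
rewrite !addn0 addn1 addn2 => /(_ sz) ->.
apply: (@eq_act_at _ _ a 1 p.+2 b) => // s x ss.
have /split2 [w1 [w2 [-> s1]]] : size s = (p + 2)%N by rewrite ss addn2.
case: w2 => [|x1 [|x2 [|]]] // _; case: x => -[|y [|]] //= _.
rewrite -[w1 ++ [:: x1; x2]]cats0 -catA act_at_musE //.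
exact: (comul_coef_mus _ w1 x1 x2 [::] y).
Qed.

Lemma straddle_left a p b v :
  eqv (a + 1 + (p + b)) (act_at a 2 1 (@mu R ns) (act_at (a + 1) 0 p.+1 cyc_mor v))
      (act_at a 1 p.+1 comul_iter v).
Proof.
move=> z; rewrite addnA => /split4 [u1 [w [t [u3 [-> s1 + st _]]]]].
case: w => [|d [|]] // _.
have sdt : size (d :: t) = p.+1 by rewrite /= st.
rewrite act_at_muE // -cat1s -catA cat1s (@act_atE _ _ a 1 p.+1 _ _ u1 (d :: t)) //.
rewrite (sum_tuple1 (fun x => comul_iter (d :: t) x * v (u1 ++ x ++ u3))) /comul_iter.
apply: eq_bigr => x _; rewrite -comul_coef_mu_l // mulr_suml; apply: eq_bigr => y _.
have -> : u1 ++ [:: x, y & t ++ u3] = (u1 ++ [:: x]) ++ (y :: t) ++ u3 by rewrite -catA.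
rewrite act_atE ?size_cat ?s1 ?addn1 //=.
rewrite (sum_tuple0 (fun t0 => cyc_mor (y :: t) t0 * v ((u1 ++ [:: x]) ++ t0 ++ u3))).
by rewrite -catA cat0s mulrA.
Qed.

Lemma straddle_right a p b v :
  eqv (a + p + 1 + b) (act_at (a + p) 2 1 (@mu R ns) (act_at a 0 p.+1 cyc_mor v))
      (act_at a 1 p.+1 comul_iter v).
Proof.
move=> z /split4 [u1 [w [w' [u3 [-> s1 sw + _]]]]]; case: w' => [|d [|]] // _.
rewrite catA act_at_muE ?size_cat ?s1 ?sw //.
have -> : (u1 ++ w) ++ [:: d] ++ u3 = u1 ++ (w ++ [:: d]) ++ u3 by rewrite !catA.
rewrite (@act_atE _ _ a 1 p.+1 _ _ u1 (w ++ [:: d])) ?size_cat ?sw ?addn1 //.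
rewrite (sum_tuple1 (fun x => comul_iter (w ++ [:: d]) x * v (u1 ++ x ++ u3))) /comul_iter.
rewrite exchange_big; apply: eq_bigr => y _.
rewrite -comul_coef_mu_r // mulr_suml; apply: eq_bigr => x _.
have -> : (u1 ++ w) ++ [:: x, y & u3] = u1 ++ (w ++ [:: x]) ++ (y :: u3) by rewrite -!catA.
rewrite act_atE ?size_cat ?sw ?addn1 //=.
by rewrite (sum_tuple0 (fun t0 => cyc_mor (w ++ [:: x]) t0 * v (u1 ++ t0 ++ y :: u3))) mulrA.
Qed.

End Layers.

Section Span.
Variables (R : realType) (ns : seq nat).
Local Notation C := R[i].
Local Notation I := {i : 'I_(size ns) & @fib ns i}.
Local Notation mor := (mor R ns).
Local Notation dimB := (@dimB R ns).
Local Notation cyc_mor := (@cyc_mor R ns).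
Local Notation etacomp := (@etacomp R ns).
Hypothesis dimB_neq0 : dimB != 0.
Implicit Types (v w : seq I -> C) (g : mor).

Definition etaspan k v : Prop := inspan (etacomp k) 0 k (fun y _ => v y).

Lemma etaspan_eqv k v w : etaspan k v -> eqv k v w -> etaspan k w.
Proof.
case=> N [c [fs [Hfs E]]] vw; exists N, c, fs; split => // y x.
by rewrite /= -vw ?size_tuple //; exact: E.
Qed.

Lemma etaspan0 k : etaspan k (fun=> 0).
Proof. by exists 0%N, (fun=> 0), (fun=> @idm R ns); split => [[] // | y x]; rewrite big_ord0. Qed.

Lemma etaspan_lin k c v w : etaspan k v -> etaspan k w -> etaspan k (fun z => c * v z + w z).
Proof.
move=> [N1 [c1 [f1 [H1 E1]]]] [N2 [c2 [f2 [H2 E2]]]].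
exists (N1 + N2)%N, (fun i => match split i with inl j => c * c1 j | inr j => c2 j end),
  (fun i => match split i with inl j => f1 j | inr j => f2 j end); split.
  by move=> i; case: (split i) => j; [exact: H1 | exact: H2].
move=> y x; rewrite big_split_ord /= (E1 y x) (E2 y x) mulr_sumr.
congr (_ + _); apply: eq_bigr => j _.
  by rewrite (unsplitK (inl j) : split (lshift N2 j) = inl j) mulrA.
by rewrite (unsplitK (inr j) : split (rshift N1 j) = inr j).
Qed.

Lemma etaspanZ k c v : etaspan k v -> etaspan k (fun z => c * v z).
Proof.
by move=> sv; apply: etaspan_eqv (etaspan_lin c sv (etaspan0 k)) _ => z _; rewrite addr0.
Qed.

Lemma etaspan_sum k N (c : 'I_N -> C) (vs : 'I_N -> seq I -> C) :
  (forall i, etaspan k (vs i)) -> etaspan k (fun z => \sum_(i < N) c i * vs i z).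
Proof.
elim: N c vs => [|N IH] c vs svs.
  by apply: etaspan_eqv (etaspan0 k) _ => z _; rewrite big_ord0.
have := etaspan_lin (c ord_max) (svs ord_max) (IH (fun i => c (widen_ord (leqnSn N) i))
  (fun i => vs (widen_ord (leqnSn N) i)) (fun i => svs _)).
by move/etaspan_eqv; apply => z _; rewrite big_ord_recr /= addrC.
Qed.

Lemma etaspan_etacomp k e : etacomp k e -> etaspan k (e^~ [::]).
Proof.
by move=> ke; exists 1%N, (fun=> 1), (fun=> e); split => // y x; rewrite big_ord1 mul1r [x]tuple0.
Qed.

Lemma etaspan_act_at a m l b g :
  (forall e, etacomp (a + m + b) e -> etaspan (a + l + b) (act_at a m l g (e^~ [::]))) ->
  forall v, etaspan (a + m + b) v -> etaspan (a + l + b) (act_at a m l g v).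
Proof.
move=> ge v [N [c [fs [Hfs Ev]]]].
apply: etaspan_eqv (etaspan_sum c (fun i => ge _ (Hfs i))) _.
move=> z /split3 [u1 [u2 [u3 [-> s1 s2 s3]]]]; symmetry; rewrite act_atE //.
transitivity (\sum_(x : m.-tuple I) \sum_(i < N) c i * (g u2 x * fs i (u1 ++ x ++ u3) [::])).
  apply: eq_bigr => x _.
  have /eqP sz : size (u1 ++ x ++ u3) = (a + m + b)%N by rewrite size_cat3 s1 s3 size_tuple.
  rewrite (Ev (Tuple sz) [tuple]) mulr_sumr; apply: eq_bigr => i _; by rewrite mulrCA.
by rewrite exchange_big; apply: eq_bigr => i _; rewrite act_atE // mulr_sumr.
Qed.

Lemma etaspan_layer a p b v : etaspan (a + b) v -> etaspan (a + p + b) (act_at a 0 p cyc_mor v).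
Proof.
case: p => [|p] sv.
  apply: etaspan_eqv (_ : etaspan (a + 0 + b) v) _ => [|z sz]; first by rewrite addn0.
  by rewrite (@act_at_cyc0 R ns a b v z sz).
apply: (@etaspan_act_at a 0 p.+1 b) => [e|]; last by rewrite addn0.
rewrite addn0 => ke; apply: etaspan_eqv (etaspan_etacomp (etacomp_cons ke (ltn0Sn p) erefl)) _.
exact: layer_cyc.
Qed.

End Span.

Section Stability.
Variables (R : realType) (ns : seq nat).
Local Notation C := R[i].
Local Notation I := {i : 'I_(size ns) & @fib ns i}.
Local Notation mor := (mor R ns).
Local Notation dimB := (@dimB R ns).
Local Notation cyc := (@cyc R ns).
Local Notation cyc_mor := (@cyc_mor R ns).
Local Notation etaspan := (@etaspan R ns).
Local Notation comul_iter := (@comul_iter R ns).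
Local Notation mus := (Defs.adjoint 2 1 (@mu R ns)).
Local Notation etas := (Defs.adjoint 0 1 (@eta R ns)).
Hypothesis dimB_neq0 : dimB != 0.
Implicit Types (v : seq I -> C) (g : mor).

Definition span_stable m l g :=
  forall a b v, etaspan (a + m + b) v -> etaspan (a + l + b) (act_at a m l g v).

Section ByLayers.
Variables (m l : nat) (g : mor) (c : C).
Hypothesis m_gt0 : (0 < m)%N.
Hypothesis act_inside : forall j e s, size s = (j + l + e)%N -> act_at j m l g cyc s = c * cyc s.
Hypothesis act_straddle : forall a b a' p b' v, (0 < p)%N -> (a + m + b = a' + p + b')%N ->
  (a' < a + m)%N -> (a < a' + p)%N -> ~~ ((a' <= a) && (a + m <= a' + p))%N ->
  etaspan (a' + b') v -> etaspan (a + l + b) (act_at a m l g (act_at a' 0 p cyc_mor v)).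

Lemma etaspan_act_over_layer a' p b' v : (0 < p)%N -> etaspan (a' + b') v ->
  (forall a b, (a' + b' = a + m + b)%N -> etaspan (a + l + b) (act_at a m l g v)) ->
  forall a b, (a' + p + b' = a + m + b)%N ->
  etaspan (a + l + b) (act_at a m l g (act_at a' 0 p cyc_mor v)).
Proof.
move=> p_gt0 sv IH a b E.
have [before|a'_lt] := leqP (a + m) a'.
  have [d ?] : exists d, a' = (a + m + d)%N by exists (a' - (a + m))%N; lia.
  subst a'; have -> : b = (d + p + b')%N by lia.
  have := IH a (d + b')%N ltac:(lia); rewrite addnA => /(etaspan_layer dimB_neq0 p).
  rewrite !addnA => /etaspan_eqv; apply=> z sz.
  by rewrite (@act_at_comm _ _ a m l d 0 p b' g cyc_mor v z sz).
have [after|a_lt] := leqP (a' + p) a.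
  have [d ?] : exists d, a = (a' + p + d)%N by exists (a - (a' + p))%N; lia.
  subst a; have ? : b' = (d + m + b)%N by lia.
  subst b'; have := IH (a' + d)%N b ltac:(lia).
  rewrite -[(a' + d + l)%N]addnA -addnA => /(etaspan_layer dimB_neq0 p).
  rewrite !addnA => /etaspan_eqv; apply=> z sz.
  by rewrite -(@act_at_comm _ _ a' 0 p d m l b cyc_mor g v z sz) addn0.
have [inside|outside] := boolP ((a' <= a) && (a + m <= a' + p))%N; last first.
  exact: act_straddle p_gt0 (esym E) a'_lt a_lt outside sv.
case/andP: inside => a'_le le_end.
have [j ?] : exists j, a = (a' + j)%N by exists (a - a')%N; lia.
subst a; have [e ?] : exists e, p = (j + m + e)%N by exists (a' + p - (a' + j + m))%N; lia.
subst p; have -> : b = (e + b')%N by lia.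
have := etaspanZ c (etaspan_layer dimB_neq0 (j + l + e) sv).
move=> /etaspan_eqv; rewrite !addnA; apply => z sz.
have sz' : size z = (a' + (j + l + e) + b')%N by rewrite sz !addnA.
rewrite (@act_at_nest _ _ a' j m l e 0 b' g cyc_mor v z sz') -act_atZ.
by symmetry; apply: (eq_act_at v _ sz') => s x; apply: act_inside.
Qed.

Lemma span_stable_by_layers : span_stable m l g.
Proof.
suff cons_stable K e : @etacomp R ns K e -> forall a b, K = (a + m + b)%N ->
    etaspan (a + l + b) (act_at a m l g (e^~ [::])).
  by move=> a b; apply: etaspan_act_at => e ke; apply: cons_stable ke a b erefl.
elim=> [|k f a' p b' kf IH p_gt0 ?] a b E; first by lia.
subst k.
have := etaspan_act_over_layer p_gt0 (etaspan_etacomp kf) IH E.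
move/etaspan_eqv; apply; apply: eqv_act_at; rewrite -E => z sz.
by rewrite (layer_cyc dimB_neq0 _ p_gt0 sz).
Qed.

End ByLayers.

Lemma span_stable_mus : span_stable 1 2 mus.
Proof.
apply: (@span_stable_by_layers 1 2 mus 1) => // [j e s ss | *]; last by lia.
by rewrite mul1r (act_at_mus_cyc dimB_neq0 ss).
Qed.

Lemma span_stable_etas : span_stable 1 0 etas.
Proof.
apply: (@span_stable_by_layers 1 0 etas 1) => // [j e s ss | *]; last by lia.
by rewrite mul1r (act_at_etas_cyc dimB_neq0 ss).
Qed.

Lemma span_stable_comul_iter p : span_stable 1 p.+1 comul_iter.
Proof.
move=> a b v sv; elim: p => [|p IH].
  by apply: etaspan_eqv sv _ => z sz; rewrite (act_at_comul_iter1 dimB_neq0 v sz).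
have := span_stable_mus (a := (a + p)%N) (b := b) (v := act_at a 1 p.+1 comul_iter v).
rewrite -[(a + p + 1)%N]addnA addn1 => /(_ IH); rewrite -[(a + p + 2)%N]addnA addn2.
by move/etaspan_eqv; apply=> z sz; rewrite (act_at_comul_iter_mus dimB_neq0 v sz).
Qed.

Lemma span_stable_mu : span_stable 2 1 (@mu R ns).
Proof.
apply: (@span_stable_by_layers 2 1 _ dimB) => //.
  by move=> j e s ss; exact: (act_at_mu_cyc R ss).
move=> a b a' p b' v p_gt0 E a'_lt a_lt outside sv.
case: p p_gt0 E a_lt outside => [//|p] _ E a_lt outside.
have [left_edge|right_edge] : a' = a.+1 \/ (a' + p = a)%N by lia.
  subst a'; have -> : b = (p + b')%N by lia.
  have := span_stable_comul_iter p (a := a) (b := b') (v := v); rewrite addn1 => /(_ sv).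
  rewrite (_ : a + p.+1 + b' = a.+1 + (p + b'))%N; last by lia.
  move/etaspan_eqv; apply=> z sz; rewrite -[a.+1]addn1 in sz *.
  by rewrite (@straddle_left R ns dimB_neq0 a p b' v z sz).
subst a; have ? : b' = (1 + b)%N by lia.
subst b'; have := span_stable_comul_iter p (a := a') (b := b) (v := v).
rewrite -addnA => /(_ sv); rewrite (_ : a' + p.+1 + b = a' + p + 1 + b)%N; last by lia.
by move/etaspan_eqv; apply=> z sz; rewrite (@straddle_right R ns dimB_neq0 a' p b v z sz).
Qed.

Lemma span_stable_eta : span_stable 0 1 (@eta R ns).
Proof.
move=> a b v; rewrite addn0 => /(etaspan_layer dimB_neq0 1) /etaspan_eqv; apply.
apply: eq_act_at => -[|c [|]] // x _; rewrite [x]tuple0 /cyc_mor /cyc /=.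
by rewrite /composable eqxx /= andbT expr0 mulr1 eq_sym.
Qed.

Lemma span_stable_idm m : span_stable m m (@idm R ns).
Proof. by move=> a b v /etaspan_eqv; apply=> z sz; rewrite (act_at_id _ sz). Qed.

Lemma span_stable_gen m l g : gen m l g -> span_stable m l g.
Proof.
case.
- exact: span_stable_eta.
- exact: span_stable_mu.
- exact: span_stable_etas.
- exact: span_stable_mus.
- exact: span_stable_idm.
Qed.

Lemma span_stable_tgen m l g : tgen m l g -> span_stable m l g.
Proof.
elim=> [k l' f /span_stable_gen //|k1 l1 f k2 l2 h gf _ IH] a b v sv.
have inner : etaspan (a + k1 + l2 + b) (act_at (a + k1) k2 l2 h v).
  by apply: IH; rewrite -(addnA a).
have := span_stable_gen gf (a := a) (b := (l2 + b)%N); rewrite !addnA => /(_ _ inner).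
move/etaspan_eqv; apply=> z sz.
by rewrite (@act_at_tens R ns a k1 l1 k2 l2 b f h v z) // sz addnA.
Qed.

Lemma cgen_etaspan k l F : cgen k l F -> k = 0%N -> etaspan l (F^~ [::]).
Proof.
elim=> [{}k {}l f tf|{}k m {}l f g _ IH tg] k0; subst k.
  have := span_stable_tgen tf (etaspan_etacomp (@etacomp_nil R ns)) (a := 0%N) (b := 0%N).
  rewrite addn0 add0n => /etaspan_eqv; apply=> z sz.
  rewrite -(@comp_act_at R ns 0 l f (@idm R ns) z sz) /Defs.comp.
  by rewrite (sum_tuple0 (fun y => f z y * @idm R ns y [::])) /idm eqxx mulr1.
have := span_stable_tgen tg (a := 0%N) (b := 0%N) (v := f^~ [::]); rewrite !addn0 !add0n.
by move=> /(_ (IH erefl)) /etaspan_eqv; apply=> z sz; rewrite (@comp_act_at R ns m l g f z sz).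
Qed.

Lemma HomCB_in_etaspan k f : HomCB 0 k f -> inspan (@etacomp R ns k) 0 k f.
Proof.
move=> [N [c [fs [cfs Ef]]]].
have [N' [c' [fs' [efs' Ef']]]] : etaspan k (f^~ [::]).
  apply: etaspan_eqv (etaspan_sum c (fun i => cgen_etaspan (cfs i) erefl)) _ => z /eqP sz.
  by rewrite (Ef (Tuple sz) [tuple]).
by exists N', c', fs'; split => // y x; rewrite [x]tuple0; apply: Ef'.
Qed.

End Stability.

Theorem lemma3p2 (R : realType) (ns : seq nat) :
  all (fun m => 0 < m)%N ns ->
  (4 <= \sum_(m <- ns) m ^ 2)%N ->
  forall (k : nat) (f : mor R ns),
    @HomCB R ns 0 k f -> @inspan R ns (@etacomp R ns k) 0 k f.
Proof.
(* Empty blocks carry no matrix units, and [n >= 4] is only used as [B != 0]. *)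
move=> _ n_ge4 k f; apply: HomCB_in_etaspan.
by rewrite /dimB card_basis pnatr_eq0 -lt0n (leq_trans _ n_ge4).
Qed.
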